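(* Every Hausdorff and compact $\mathbb{B}$-topological space is normal; every regular and compact $\mathbb{B}$-topological space is normal.
   Context: $\mathbb{B}=\{0,1,tt,ff\}$ is the four-element Boolean algebra with bottom $0$, top $1$, and $tt,ff$ incomparable complements; $\neg$ its complement, $a\to b=\neg a\vee b$. A $\mathbb{B}$-topology on $X$ is $\tau\subseteq\mathbb{B}^X$ containing all constant maps and closed under arbitrary pointwise joins and finite pointwise meets; $\mu$ is closed if $\neg\mu\in\tau$; $\overline{\nu}$ is the meet of all closed sets $\ge\nu$. $\mathrm{sub}_X(\lambda,\mu)=\bigwedge_x(\lambda(x)\to\mu(x))$. $(X,\tau)$ is compact if the constant map $1_X$ satisfies $\mathrm{sub}_X(1_X,\bigvee\Lambda)=\bigvee_{\lambda\in\Lambda}\mathrm{sub}_X(1_X,\lambda)$ for every directed $\Lambda\subseteq\tau$. Specialization $\mathbb{B}$-order: $\Omega(\tau)(x,y)=\bigwedge_{\lambda\in\tau}(\lambda(x)\to\lambda(y))$. The product $(X,\tau)\times(X,\tau)$ is $X\times X$ with the $\mathbb{B}$-topology generated by the constants and $\{\lambda\circ\pi_1,\lambda\circ\pi_2:\lambda\in\tau\}$. $(X,\tau)$ is $T_0$ if $\Omega(\tau)(x,y)=1=\Omega(\tau)(y,x)$ implies $x=y$; $R_1$ if $\Omega(\tau)$ is closed in $(X,\tau)\times(X,\tau)$; Hausdorff if $T_0$ and $R_1$; regular if every $\lambda\in\tau$ equals $\bigvee\{\mu\in\tau:\overline{\mu}\le\lambda\}$; normal if for every open $\lambda$ and closed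 $\mu$ with $\mu\le\lambda$ there is an open $\nu$ with $\mu\le\nu\le\overline{\nu}\le\lambda$. *)

From Stdlib Require Import Classical ClassicalDescription.

Inductive B : Type := B0 | B1 | Btt | Bff.

Definition bneg (a : B) : B :=
  match a with B0 => B1 | B1 => B0 | Btt => Bff | Bff => Btt end.

Definition bjoin (a b : B) : B :=
  match a, b with
  | B0, c | c, B0 => c
  | B1, _ | _, B1 => B1
  | Btt, Btt => Btt
  | Bff, Bff => Bff
  | _, _ => B1
  end.

Definition bmeet (a b : B) : B := bneg (bjoin (bneg a) (bneg b)).

Definition bimp (a b : B) : B := bjoin (bneg a) b.

Definition ble (a b : B) : Prop := bjoin a b = b.

Definition bsup (P : B -> Prop) : B :=
  if excluded_middle_informative (P B1 \/ (P Btt /\ P Bff)) then B1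
  else if excluded_middle_informative (P Btt) then Btt
  else if excluded_middle_informative (P Bff) then Bff
  else B0.

Definition binf (P : B -> Prop) : B := bneg (bsup (fun c => P (bneg c))).

Definition fle {X : Type} (f g : X -> B) : Prop := forall x, ble (f x) (g x).

Definition constB {X : Type} (a : B) : X -> B := fun _ => a.

Definition fjoin {X : Type} (Lam : (X -> B) -> Prop) : X -> B :=
  fun x => bsup (fun b => exists l, Lam l /\ l x = b).

Definition is_Btopology {X : Type} (tau : (X -> B) -> Prop) : Prop :=
  (forall a : B, tau (constB a)) /\
  (forall Lam : (X -> B) -> Prop, (forall l, Lam l -> tau l) -> tau (fjoin Lam)) /\
  (forall l m, tau l -> tau m -> tau (fun x => bmeet (l x) (m x))).

Definition Bclosed {X : Type} (tau : (X -> B) -> Prop) (mu : X -> B) : Prop :=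
  tau (fun x => bneg (mu x)).

Definition Bclosure {X : Type} (tau : (X -> B) -> Prop) (nu : X -> B) : X -> B :=
  fun x => binf (fun b => exists mu, Bclosed tau mu /\ fle nu mu /\ mu x = b).

Definition subX {X : Type} (l m : X -> B) : B :=
  binf (fun b => exists x, bimp (l x) (m x) = b).

Definition directed {X : Type} (Lam : (X -> B) -> Prop) : Prop :=
  (exists l, Lam l) /\
  (forall l m, Lam l -> Lam m -> exists n, Lam n /\ fle l n /\ fle m n).

Definition Bcompact {X : Type} (tau : (X -> B) -> Prop) : Prop :=
  forall Lam : (X -> B) -> Prop, (forall l, Lam l -> tau l) -> directed Lam ->
    subX (constB B1) (fjoin Lam) =
    bsup (fun b => exists l, Lam l /\ subX (constB B1) l = b).

Definition Omega {X : Type} (tau : (X -> B) -> Prop) (x y : X) : B :=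
  binf (fun b => exists l, tau l /\ bimp (l x) (l y) = b).

Definition prodBtop {X : Type} (tau : (X -> B) -> Prop) : (X * X -> B) -> Prop :=
  fun f => forall sigma : (X * X -> B) -> Prop, is_Btopology sigma ->
    (forall a : B, sigma (constB a)) ->
    (forall l, tau l -> sigma (fun p => l (fst p)) /\ sigma (fun p => l (snd p))) ->
    sigma f.

Definition BT0 {X : Type} (tau : (X -> B) -> Prop) : Prop :=
  forall x y, Omega tau x y = B1 -> Omega tau y x = B1 -> x = y.

Definition BR1 {X : Type} (tau : (X -> B) -> Prop) : Prop :=
  Bclosed (prodBtop tau) (fun p => Omega tau (fst p) (snd p)).

Definition BHausdorff {X : Type} (tau : (X -> B) -> Prop) : Prop :=
  BT0 tau /\ BR1 tau.

Definition Bregular {X : Type} (tau : (X -> B) -> Prop) : Prop :=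
  forall l, tau l ->
    forall x, l x = bsup (fun b => exists mu, tau mu /\ fle (Bclosure tau mu) l /\ mu x = b).

Definition Bnormal {X : Type} (tau : (X -> B) -> Prop) : Prop :=
  forall l mu, tau l -> Bclosed tau mu -> fle mu l ->
    exists nu, tau nu /\ fle mu nu /\ fle nu (Bclosure tau nu) /\ fle (Bclosure tau nu) l.

(* B has exactly two atoms, tt and ff, and an element of B is 1 as soon as both
   atoms lie below it; so all arguments can be run one atom at a time.  For a
   fixed atom c, compactness turns a directed open family covering c at every
   point into a single member covering c everywhere.

   Regular case: for an open l above a closed mu, regularity provides around
   each point x and atom c <= mu x an open nu with c <= nu x and closure below
   l.  The finite joins of such nu, together with the open complement of mu,
   form a directed cover; compactness applied to both atoms yields one nu
   that works.

   Hausdorff case: R1 makes the complement of Omega open in the product, and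
   every open set of the product is, atomwise, a union of rectangles u x v.
   Since Omega is 1 on the diagonal, these rectangles are disjoint boxes
   separating points x, y with c <= neg (Omega x y).  Fix x and c <= l x; the
   disjoint pairs (u, v) with c <= u x, joined with l, cover c everywhere, so
   by compactness one v covers the complement of l at c, and u meets c inside
   the closed set neg v below l: regularity again, atomwise. *)
From Stdlib Require Import Classical ClassicalDescription FunctionalExtensionality.

Ltac bcases := intros; unfold ble, bimp, bmeet in *;
  repeat match goal with b : B |- _ => destruct b end; simpl in *;
  try reflexivity; try congruence; try tauto.

Definition atom (c : B) : Prop := c = Btt \/ c = Bff.

Lemma ble_refl a : ble a a. Proof. bcases. Qed.
Lemma ble_trans a b c : ble a b -> ble b c -> ble a c. Proof. bcases. Qed.
Lemma ble_antisym a b : ble a b -> ble b a -> a = b. Proof. bcases. Qed.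
Lemma ble0 b : ble B0 b. Proof. bcases. Qed.
Lemma ble1 b : ble b B1. Proof. bcases. Qed.
Lemma ble0_eq a : ble a B0 -> a = B0. Proof. bcases. Qed.
Lemma bnegK a : bneg (bneg a) = a. Proof. bcases. Qed.
Lemma bneg_anti a b : ble a b -> ble (bneg b) (bneg a). Proof. bcases. Qed.
Lemma bjoin_ubl a b : ble a (bjoin a b). Proof. bcases. Qed.
Lemma bjoin_ubr a b : ble b (bjoin a b). Proof. bcases. Qed.
Lemma bjoin_lub a b s : ble a s -> ble b s -> ble (bjoin a b) s. Proof. bcases. Qed.
Lemma bjoin_mono a b a' b' : ble a a' -> ble b b' -> ble (bjoin a b) (bjoin a' b').
Proof. bcases. Qed.
Lemma bmeet_lbl a b : ble (bmeet a b) a. Proof. bcases. Qed.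
Lemma bmeet_lbr a b : ble (bmeet a b) b. Proof. bcases. Qed.
Lemma bmeet_glb c a b : ble c a -> ble c b -> ble c (bmeet a b). Proof. bcases. Qed.
Lemma ble_bmeet c a b : ble c (bmeet a b) -> ble c a /\ ble c b. Proof. bcases. Qed.
Lemma bmeet_mono a b a' b' : ble a a' -> ble b b' -> ble (bmeet a b) (bmeet a' b').
Proof. bcases. Qed.
Lemma bmeet_interchange a b c d :
  ble (bmeet (bmeet a b) (bmeet c d)) (bmeet (bmeet a c) (bmeet b d)).
Proof. bcases. Qed.
Lemma bneg_bjoin a b : bneg (bjoin a b) = bmeet (bneg a) (bneg b). Proof. bcases. Qed.
Lemma bneg_bmeet_bneg a b : bneg (bmeet (bneg a) b) = bjoin a (bneg b). Proof. bcases. Qed.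
Lemma bimp1 b : bimp B1 b = b. Proof. bcases. Qed.
Lemma bimpp a : bimp a a = B1. Proof. bcases. Qed.
Lemma ble_bimp_bneg c a b : ble c a -> ble c (bneg b) -> ble c (bneg (bimp a b)).
Proof. bcases. Qed.
Lemma bjoin_bneg1 a b : bjoin a (bneg b) = B1 -> ble b a. Proof. bcases. Qed.
Lemma disjoint_bmeet_bjoin a b c d :
  bmeet a c = B0 -> bmeet b d = B0 -> bmeet (bmeet a b) (bjoin c d) = B0.
Proof. bcases. Qed.
Lemma disjoint_le_bneg u v c : bmeet u v = B0 -> ble (bmeet u c) (bmeet (bneg v) c).
Proof. bcases. Qed.
Lemma bmeet_bneg_le v l c : ble c (bjoin v l) -> ble (bmeet (bneg v) c) l.
Proof. bcases. Qed.

Lemma atom_ble_bmeet c a : atom c -> ble c a -> ble c (bmeet a c).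
Proof. unfold atom; bcases. Qed.
Lemma atom_ble_bneg c a : atom c -> ~ ble c a -> ble c (bneg a).
Proof. unfold atom; bcases. Qed.
Lemma atoms_ble_eq1 s : ble Btt s -> ble Bff s -> s = B1. Proof. bcases. Qed.

Lemma bsup_ub (P : B -> Prop) b : P b -> ble b (bsup P).
Proof.
  intro H; unfold bsup; repeat destruct excluded_middle_informative;
  destruct b; try reflexivity; exfalso; tauto.
Qed.

Lemma bsup_lub (P : B -> Prop) s : (forall b, P b -> ble b s) -> ble (bsup P) s.
Proof.
  intro H; pose proof (H B1); pose proof (H Btt); pose proof (H Bff).
  unfold bsup; repeat destruct excluded_middle_informative; unfold ble in *;
  destruct s; simpl in *; intuition congruence.
Qed.

Lemma atom_ble_bsup (P : B -> Prop) c : atom c -> ble c (bsup P) -> exists b, P b /\ ble c b.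
Proof.
  unfold atom, bsup; intros Hc; repeat destruct excluded_middle_informative; intro Hle;
  repeat match goal with H : _ \/ _ |- _ => destruct H end;
  repeat match goal with H : _ /\ _ |- _ => destruct H end;
  subst; unfold ble in *; simpl in *; try discriminate;
  first [ exists B1; split; [assumption | reflexivity]
        | exists Btt; split; [assumption | reflexivity]
        | exists Bff; split; [assumption | reflexivity] ].
Qed.

Lemma binf_lb (P : B -> Prop) b : P b -> ble (binf P) b.
Proof.
  intro H; unfold binf; rewrite <- (bnegK b); apply bneg_anti, bsup_ub.
  now rewrite bnegK.
Qed.

Lemma binf_glb (P : B -> Prop) s : (forall b, P b -> ble s b) -> ble s (binf P).
Proof.
  intro H; unfold binf; rewrite <- (bnegK s); apply bneg_anti, bsup_lub.
  intros c Hc; rewrite <- (bnegK c); apply bneg_anti, H, Hc.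
Qed.

Lemma ble_fjoin {X} (Lam : (X -> B) -> Prop) l x c :
  Lam l -> ble c (l x) -> ble c (fjoin Lam x).
Proof. intros Hl Hc; apply (ble_trans _ _ _ Hc), bsup_ub; now exists l. Qed.

Lemma ble_sub1P {X} (f : X -> B) c : ble c (subX (constB B1) f) <-> forall x, ble c (f x).
Proof.
  split.
  - intros H x; apply (ble_trans _ _ _ H); rewrite <- (bimp1 (f x)).
    apply binf_lb; now exists x.
  - intro H; apply binf_glb; intros b [x <-]; unfold constB; rewrite bimp1; apply H.
Qed.

Lemma Omega_ble_bimp {X} (tau : (X -> B) -> Prop) l x y :
  tau l -> ble (Omega tau x y) (bimp (l x) (l y)).
Proof. intro H; apply binf_lb; now exists l. Qed.

Lemma Omega_diag {X} (tau : (X -> B) -> Prop) x : Omega tau x x = B1.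
Proof.
  apply ble_antisym; [apply ble1 |].
  apply binf_glb; intros b [l [_ <-]]; rewrite bimpp; apply ble_refl.
Qed.

Section Btopology.

Variables (X : Type) (tau : (X -> B) -> Prop).
Hypothesis tau_top : is_Btopology tau.

Lemma open_const a : tau (constB a).
Proof. exact (proj1 tau_top a). Qed.

Lemma open_meet f g : tau f -> tau g -> tau (fun x => bmeet (f x) (g x)).
Proof. exact (proj2 (proj2 tau_top) f g). Qed.

Lemma open_join f g : tau f -> tau g -> tau (fun x => bjoin (f x) (g x)).
Proof.
  intros Hf Hg.
  replace (fun x => bjoin (f x) (g x)) with (fjoin (fun l => l = f \/ l = g)).
  - apply (proj1 (proj2 tau_top)); intros l [-> | ->]; assumption.
  - apply functional_extensionality; intro x; apply ble_antisym.
    + apply bsup_lub; intros b [l [[-> | ->] <-]]; [apply bjoin_ubl | apply bjoin_ubr].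
    + apply bjoin_lub; apply bsup_ub; [exists f | exists g]; auto.
Qed.

Lemma closed_join f g : Bclosed tau f -> Bclosed tau g ->
  Bclosed tau (fun x => bjoin (f x) (g x)).
Proof.
  intros Hf Hg; unfold Bclosed.
  replace (fun x => bneg (bjoin (f x) (g x))) with (fun x => bmeet (bneg (f x)) (bneg (g x))).
  - now apply open_meet.
  - apply functional_extensionality; intro x; now rewrite bneg_bjoin.
Qed.

Lemma closure_closed nu : Bclosed tau (Bclosure tau nu).
Proof.
  unfold Bclosed.
  replace (fun x => bneg (Bclosure tau nu x))
    with (fjoin (fun l => exists m, Bclosed tau m /\ fle nu m /\ l = fun x => bneg (m x))).
  - apply (proj1 (proj2 tau_top)); now intros l [m [Hm [_ ->]]].
  - apply functional_extensionality; intro x; unfold Bclosure, binf; rewrite bnegK.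
    apply ble_antisym; apply bsup_lub.
    + intros b [l [[m [Hm [Hnu ->]]] <-]]; apply bsup_ub.
      exists m; now rewrite bnegK.
    + intros b [m [Hm [Hnu Hb]]]; apply bsup_ub.
      exists (fun x => bneg (m x)); split; [now exists m | now rewrite Hb, bnegK].
Qed.

End Btopology.

Lemma closure_ge {X} (tau : (X -> B) -> Prop) nu : fle nu (Bclosure tau nu).
Proof. intro x; apply binf_glb; now intros b [mu [_ [H <-]]]. Qed.

Lemma closure_le {X} (tau : (X -> B) -> Prop) nu m :
  Bclosed tau m -> fle nu m -> fle (Bclosure tau nu) m.
Proof. intros H1 H2 x; apply binf_lb; now exists m. Qed.

Lemma compact_atom_cover {X} (tau : (X -> B) -> Prop) (D : (X -> B) -> Prop) c :
  Bcompact tau -> (forall d, D d -> tau d) -> directed D -> atom c ->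
  (forall x, ble c (fjoin D x)) -> exists d, D d /\ forall x, ble c (d x).
Proof.
  intros Hcomp Dopen Ddir Hc Hcov.
  apply ble_sub1P in Hcov; rewrite (Hcomp D Dopen Ddir) in Hcov.
  destruct (atom_ble_bsup _ _ Hc Hcov) as [b [[d [Hd <-]] Hb]].
  exists d; split; [assumption | now apply ble_sub1P].
Qed.

(* The atomwise form of regularity: what both hypotheses provide. *)
Definition atom_regular {X} (tau : (X -> B) -> Prop) : Prop :=
  forall l, tau l -> forall x c, atom c -> ble c (l x) ->
  exists nu m, tau nu /\ Bclosed tau m /\ fle nu m /\ fle m l /\ ble c (nu x).

Lemma regular_atom_regular {X} (tau : (X -> B) -> Prop) :
  is_Btopology tau -> Bregular tau -> atom_regular tau.
Proof.
  intros T R l Hl x c Hc Hcx; rewrite (R l Hl x) in Hcx.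
  destruct (atom_ble_bsup _ _ Hc Hcx) as [b [[nu [Hnu [Hcl <-]]] Hb]].
  exists nu, (Bclosure tau nu); repeat split; auto using closure_closed, closure_ge.
Qed.

Lemma atom_regular_normal {X} (tau : (X -> B) -> Prop) :
  is_Btopology tau -> Bcompact tau -> atom_regular tau -> Bnormal tau.
Proof.
  intros T C R l mu Hl Hmu Hmul.
  set (D := fun d : X -> B => exists nu m, tau nu /\ Bclosed tau m /\ fle nu m /\ fle m l /\
              d = fun x => bjoin (nu x) (bneg (mu x))).
  assert (D0 : D (fun x => bjoin B0 (bneg (mu x)))).
  { exists (constB B0), (constB B0).
    repeat split; auto using ble_refl, ble0; apply (open_const _ _ T). }
  assert (Dopen : forall d, D d -> tau d).
  { intros d [nu [m [Hnu [_ [_ [_ ->]]]]]]; apply open_join; auto. }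
  assert (Ddir : directed D).
  { split; [eexists; exact D0 |].
    intros d1 d2 [nu1 [m1 [O1 [C1 [L1 [M1 ->]]]]]] [nu2 [m2 [O2 [C2 [L2 [M2 ->]]]]]].
    exists (fun x => bjoin (bjoin (nu1 x) (nu2 x)) (bneg (mu x))); repeat split.
    - exists (fun x => bjoin (nu1 x) (nu2 x)), (fun x => bjoin (m1 x) (m2 x)).
      repeat split.
      + apply open_join; auto.
      + apply closed_join; auto.
      + intro x; apply bjoin_mono; auto.
      + intro x; apply bjoin_lub; auto.
    - intro x; apply bjoin_mono; [apply bjoin_ubl | apply ble_refl].
    - intro x; apply bjoin_mono; [apply bjoin_ubr | apply ble_refl]. }
  assert (Dcov : forall c, atom c -> forall x, ble c (fjoin D x)).
  { intros c Hc x; destruct (classic (ble c (bneg (mu x)))) as [Hn | Hn].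
    - apply (ble_fjoin _ _ _ _ D0); eapply ble_trans; [exact Hn | apply bjoin_ubr].
    - assert (Hcmu : ble c (mu x)) by (rewrite <- (bnegK (mu x)); now apply atom_ble_bneg).
      destruct (R l Hl x c Hc (ble_trans _ _ _ Hcmu (Hmul x)))
        as [nu [m [Hnu [Hm [Hnum [Hml Hcnu]]]]]].
      apply (ble_fjoin _ (fun x => bjoin (nu x) (bneg (mu x)))).
      + now exists nu, m.
      + eapply ble_trans; [exact Hcnu | apply bjoin_ubl]. }
  destruct (compact_atom_cover _ _ _ C Dopen Ddir (or_introl eq_refl) (Dcov _ (or_introl eq_refl)))
    as [d1 [Hd1 Htt]].
  destruct (compact_atom_cover _ _ _ C Dopen Ddir (or_intror eq_refl) (Dcov _ (or_intror eq_refl)))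
    as [d2 [Hd2 Hff]].
  destruct (proj2 Ddir d1 d2 Hd1 Hd2) as [d [[nu [m [Hnu [Hm [Hnum [Hml ->]]]]]] [L1 L2]]].
  exists nu; repeat split; auto using closure_ge.
  - intro x; apply bjoin_bneg1, atoms_ble_eq1.
    + eapply ble_trans; [apply Htt | apply L1].
    + eapply ble_trans; [apply Hff | apply L2].
  - intro x; eapply ble_trans; [apply closure_le; eauto | apply Hml].
Qed.

Definition rect_open {X} (tau : (X -> B) -> Prop) (f : X * X -> B) : Prop :=
  forall x y c, atom c -> ble c (f (x, y)) ->
  exists u v, tau u /\ tau v /\ ble c (u x) /\ ble c (v y) /\
    forall p q, ble (bmeet (u p) (v q)) (f (p, q)).

Lemma rect_open_top {X} (tau : (X -> B) -> Prop) :
  is_Btopology tau -> is_Btopology (rect_open tau).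
Proof.
  intros T; split; [| split].
  - intros a x y c Hc H; exists (constB a), (constB a).
    repeat split; try apply (open_const _ _ T); auto; intros; apply bmeet_lbl.
  - intros Lam HL x y c Hc H.
    destruct (atom_ble_bsup _ _ Hc H) as [b [[g [Hg <-]] Hb]].
    destruct (HL g Hg x y c Hc Hb) as [u [v [Hu [Hv [Hux [Hvy Huv]]]]]].
    exists u, v; repeat split; auto.
    intros p q; eapply ble_trans; [apply Huv | apply bsup_ub; now exists g].
  - intros f g Hf Hg x y c Hc H; destruct (ble_bmeet _ _ _ H) as [H1 H2].
    destruct (Hf x y c Hc H1) as [u1 [v1 [Hu1 [Hv1 [Hux1 [Hvy1 Huv1]]]]]].
    destruct (Hg x y c Hc H2) as [u2 [v2 [Hu2 [Hv2 [Hux2 [Hvy2 Huv2]]]]]].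
    exists (fun p => bmeet (u1 p) (u2 p)), (fun p => bmeet (v1 p) (v2 p)).
    repeat split.
    + apply open_meet; auto.
    + apply open_meet; auto.
    + now apply bmeet_glb.
    + now apply bmeet_glb.
    + intros p q; eapply ble_trans; [apply bmeet_interchange | apply bmeet_mono; auto].
Qed.

Lemma prodBtop_rect_open {X} (tau : (X -> B) -> Prop) f :
  is_Btopology tau -> prodBtop tau f -> rect_open tau f.
Proof.
  intros T Hf; apply Hf; [now apply rect_open_top | apply (rect_open_top _ T) |].
  intros l Hl; split; intros a b c Hc H.
  - exists l, (constB B1); repeat split; try apply (open_const _ _ T); auto using ble1.
    intros; apply bmeet_lbl.
  - exists (constB B1), l; repeat split; try apply (open_const _ _ T); auto using ble1.
    intros; apply bmeet_lbr.
Qed.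

Lemma R1_separation {X} (tau : (X -> B) -> Prop) x y c :
  is_Btopology tau -> BR1 tau -> atom c -> ble c (bneg (Omega tau x y)) ->
  exists u v, tau u /\ tau v /\ ble c (u x) /\ ble c (v y) /\
    forall p, bmeet (u p) (v p) = B0.
Proof.
  intros T R1 Hc Hxy.
  destruct (prodBtop_rect_open _ _ T R1 x y c Hc Hxy) as [u [v [Hu [Hv [Hux [Hvy Huv]]]]]].
  exists u, v; repeat split; auto.
  intro p; apply ble0_eq; generalize (Huv p p); simpl; now rewrite Omega_diag.
Qed.

Lemma R1_atom_regular {X} (tau : (X -> B) -> Prop) :
  is_Btopology tau -> Bcompact tau -> BR1 tau -> atom_regular tau.
Proof.
  intros T C R1 l Hl x c Hc Hcx.
  set (D := fun w : X -> B => exists u v, tau u /\ tau v /\ ble c (u x) /\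
              (forall p, bmeet (u p) (v p) = B0) /\ w = fun y => bjoin (v y) (l y)).
  assert (D0 : D (fun y => bjoin B0 (l y))).
  { exists (constB B1), (constB B0); repeat split; try apply (open_const _ _ T); auto using ble1. }
  assert (Dopen : forall d, D d -> tau d).
  { intros d [u [v [_ [Hv [_ [_ ->]]]]]]; now apply open_join. }
  assert (Ddir : directed D).
  { split; [eexists; exact D0 |].
    intros d1 d2 [u1 [v1 [Hu1 [Hv1 [Hux1 [Hd1 ->]]]]]] [u2 [v2 [Hu2 [Hv2 [Hux2 [Hd2 ->]]]]]].
    exists (fun y => bjoin (bjoin (v1 y) (v2 y)) (l y)); repeat split.
    - exists (fun p => bmeet (u1 p) (u2 p)), (fun p => bjoin (v1 p) (v2 p)).
      repeat split.
      + apply open_meet; auto.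
      + apply open_join; auto.
      + now apply bmeet_glb.
      + intro p; now apply disjoint_bmeet_bjoin.
    - intro y; apply bjoin_mono; [apply bjoin_ubl | apply ble_refl].
    - intro y; apply bjoin_mono; [apply bjoin_ubr | apply ble_refl]. }
  assert (Dcov : forall y, ble c (fjoin D y)).
  { intro y; destruct (classic (ble c (l y))) as [Hy | Hy].
    - apply (ble_fjoin _ _ _ _ D0); eapply ble_trans; [exact Hy | apply bjoin_ubr].
    - assert (Hxy : ble c (bneg (Omega tau x y))).
      { eapply ble_trans; [| apply bneg_anti, (Omega_ble_bimp _ l); auto].
        apply ble_bimp_bneg; auto using atom_ble_bneg. }
      destruct (R1_separation _ x y c T R1 Hc Hxy) as [u [v [Hu [Hv [Hux [Hvy Huv]]]]]].
      apply (ble_fjoin _ (fun y => bjoin (v y) (l y))).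
      + now exists u, v.
      + eapply ble_trans; [exact Hvy | apply bjoin_ubl]. }
  destruct (compact_atom_cover _ _ _ C Dopen Ddir Hc Dcov)
    as [d [[u [v [Hu [Hv [Hux [Huv ->]]]]]] Hvl]].
  exists (fun y => bmeet (u y) c), (fun y => bmeet (bneg (v y)) c); repeat split.
  - apply open_meet; [auto | auto | apply (open_const _ _ T)].
  - unfold Bclosed.
    replace (fun y => bneg (bmeet (bneg (v y)) c)) with (fun y => bjoin (v y) (bneg c)).
    + apply open_join; [auto | auto | apply (open_const _ _ T)].
    + apply functional_extensionality; intro y; now rewrite bneg_bmeet_bneg.
  - intro y; now apply disjoint_le_bneg.
  - intro y; now apply bmeet_bneg_le.
  - now apply atom_ble_bmeet.
Qed.

Theorem mainTheorem20 (X : Type) (tau : (X -> B) -> Prop) :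
  is_Btopology tau -> Bcompact tau ->
  (BHausdorff tau -> Bnormal tau) /\ (Bregular tau -> Bnormal tau).
Proof.
  intros T C; split.
  - intros [_ R1]; apply atom_regular_normal, R1_atom_regular; auto.
  - intros R; apply atom_regular_normal, regular_atom_regular; auto.
Qed.
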